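(* Let $p$ be a prime and $R=\mathbb{F}_p[x,x^{-1}]$. For any integers $n>0$, $b>0$ and $0<r\le nb$ there is an additive subgroup $U\subset R^n$ such that $e(U)=b$ and ${\rm rk}_b(U)=r$.
   Context: For an additive subgroup $U$ of an $R$-module, $e(U)$ is the minimal positive integer $e$ with $x^eU=U$ (and $+\infty$ if none). If $x^bU=U$, ${\rm rk}_b(U)$ is the rank of $U$ regarded as an $R$-module via $x\ast u=x^bu$, where the rank of a finitely generated $R$-module is the maximal number of elements freely generating a free submodule ($0$ if none). *)

From mathcomp Require Import all_boot all_order all_algebra.
Set Implicit Arguments. Unset Strict Implicit. Unset Printing Implicit Defensive.
Import Order.TTheory GRing.Theory Num.Theory.
Local Open Scope ring_scope.

(* Laurent polynomials over F, R = F[x,x^-1], are represented by their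
   coefficient functions int -> F with finite support: f = sum_m f(m) x^m. *)
Definition laurent_fs (F : nzRingType) (f : int -> F) : Prop :=
  exists N : nat, forall m : int, N%:Z < `|m| -> f m = 0.

(* Ambient functions for R^n (coefficient functions of n Laurent polynomials). *)
Definition vec (F : nzRingType) (n : nat) := 'I_n -> int -> F.

Definition in_Rn (F : nzRingType) (n : nat) (v : vec F n) : Prop :=
  forall i, laurent_fs (v i).

(* multiplication by x^e on R^n : coefficient of x^m in x^e f is f(m-e) *)
Definition xpow_act (F : nzRingType) (n : nat) (e : int) (v : vec F n) : vec F n :=
  fun i m => v i (m - e).

Definition additive_subgroup (F : nzRingType) (n : nat) (U : vec F n -> Prop) : Prop :=
  [/\ (forall v, U v -> in_Rn v),
      U (fun _ _ => 0),
      (forall u v, U u -> U v -> U (fun i m => u i m + v i m)) &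
      (forall u, U u -> U (fun i m => - u i m))].

Definition xpow_stable (F : nzRingType) (n : nat) (e : int) (U : vec F n -> Prop) : Prop :=
  (forall v, U v -> U (xpow_act e v)) /\
  (forall v, U v -> exists w, U w /\ v = xpow_act e w).

Definition e_equals (F : nzRingType) (n : nat) (U : vec F n -> Prop) (b : nat) : Prop :=
  [/\ (0 < b)%N, xpow_stable b%:Z U &
      forall e : nat, (0 < e)%N -> (e < b)%N -> ~ xpow_stable e%:Z U].

(* Action of a Laurent polynomial c (supported in [-N,N]) on u in the twisted
   R-module structure x * u = x^b u, i.e. c * u = sum_j c(j) x^(b j) u. *)
Definition twisted_act (F : nzRingType) (n b N : nat) (c : int -> F) (u : vec F n)
  : vec F n :=
  fun i m => \sum_(t < (N.*2).+1)
               c (t%:Z - N%:Z) * u i (m - b%:Z * (t%:Z - N%:Z)).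

Definition free_family_b (F : nzRingType) (n b s : nat) (u : 'I_s -> vec F n) : Prop :=
  forall (N : nat) (c : 'I_s -> int -> F),
    (forall k (j : int), N%:Z < `|j| -> c k j = 0) ->
    (forall i m, \sum_(k < s) twisted_act b N (c k) (u k) i m = 0) ->
    forall k j, c k j = 0.

Definition rank_b (F : nzRingType) (n : nat) (U : vec F n -> Prop) (b r : nat) : Prop :=
  (exists u : 'I_r -> vec F n, (forall k, U (u k)) /\ free_family_b b u) /\
  (forall s (u : 'I_s -> vec F n), (forall k, U (u k)) -> free_family_b b u -> (s <= r)%N).

(* Write y = x^b.  A vector of R^n is a sum over the nb slots (i, d), i < n,
   d < b, of F[y, y^-1]-multiples of x^d e_i.  Number the slots k = i + n d and
   let U be the F[y, y^-1]-span of the first r of them, except that on slot 0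
   only the multiples of 1 - y are kept.  The r evident generators are free
   for the twisted structure, and over a finite field a counting argument
   bounds the size of any free family: s free elements produce
   #|F|^(s (2N + 1)) distinct vectors in a set of size #|F|^(r (2N + O(1))).
   U is x^b-stable; for 0 < e < b, either the slot (0, b - e) is used and x^e
   maps x^(-e) e_0 to e_0, which is not a multiple of 1 - y, or it is unused and
   x^(-e) maps (1 - y) e_0 outside U. *)

From mathcomp Require Import all_boot all_order all_algebra zify.
From Stdlib Require Import Classical FunctionalExtensionality.
Set Implicit Arguments. Unset Strict Implicit. Unset Printing Implicit Defensive.
Import Order.TTheory GRing.Theory Num.Theory.
Local Open Scope ring_scope.

Section LaurentSupport.
Variable F : nzRingType.
Implicit Types (f g : int -> F).

Lemma laurent_fs0 : laurent_fs (fun _ : int => 0 : F).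
Proof. by exists 0%N. Qed.

Lemma laurent_fsD f g : laurent_fs f -> laurent_fs g -> laurent_fs (fun m => f m + g m).
Proof.
by move=> [N1 H1] [N2 H2]; exists (maxn N1 N2) => m Hm; rewrite H1 ?H2 ?addr0 //; lia.
Qed.

Lemma laurent_fsN f : laurent_fs f -> laurent_fs (fun m => - f m).
Proof. by move=> [N H]; exists N => m Hm; rewrite H ?oppr0. Qed.

Lemma laurent_fsMl (c : F) f : laurent_fs f -> laurent_fs (fun m => c * f m).
Proof. by move=> [N H]; exists N => m Hm; rewrite H ?mulr0. Qed.

Lemma laurent_fs_shift f (e : int) : laurent_fs f -> laurent_fs (fun m => f (m - e)).
Proof. by move=> [N H]; exists (N + `|e|)%N => m Hm; apply: H; lia. Qed.

Lemma laurent_fs_stable_ge_eq0 g (j0 : int) : laurent_fs g ->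
  (forall k, j0 < k -> g k = g (k - 1)) -> forall j, j0 <= j -> g j = 0.
Proof.
move=> [N HN] Hg j Hj.
have shift : forall t : nat, g j = g (j + t%:Z).
  elim=> [|t IH]; first by rewrite addr0.
  by rewrite IH (Hg (j + t.+1%:Z)); [congr g|]; lia.
by rewrite (shift (N + `|j|).+1); apply: HN; lia.
Qed.

Lemma laurent_fs_stable_le_eq0 g (j0 : int) : laurent_fs g ->
  (forall k, k <= j0 -> g k = g (k - 1)) -> forall j, j <= j0 -> g j = 0.
Proof.
move=> [N HN] Hg j Hj.
have shift : forall t : nat, g j = g (j - t%:Z).
  elim=> [|t IH]; first by rewrite subr0.
  by rewrite IH (Hg (j - t%:Z)); [congr g|]; lia.
by rewrite (shift (N + `|j|).+1); apply: HN; lia.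
Qed.

Definition delta (d : int) : int -> F := fun m => (m == d)%:R.

Lemma laurent_fs_delta d : laurent_fs (delta d).
Proof. by exists `|d|%N => m Hm; rewrite /delta; case: eqP => // Em; lia. Qed.

(* [f] is a coboundary iff [f] is divisible by [1 - x] in [F[x, x^-1]]. *)
Definition coboundary f : Prop :=
  exists2 g, laurent_fs g & forall k, f k = g k - g (k - 1).

Lemma coboundary0 : coboundary (fun _ => 0).
Proof. by exists (fun _ => 0); [exact: laurent_fs0 | move=> k; rewrite subr0]. Qed.

Lemma coboundaryD f g : coboundary f -> coboundary g -> coboundary (fun k => f k + g k).
Proof.
move=> [f' Hf' Ef] [g' Hg' Eg]; exists (fun k => f' k + g' k); first exact: laurent_fsD.
by move=> k; rewrite Ef Eg addrACA opprD.
Qed.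

Lemma coboundaryN f : coboundary f -> coboundary (fun k => - f k).
Proof.
move=> [f' Hf' Ef]; exists (fun k => - f' k); first exact: laurent_fsN.
by move=> k; rewrite Ef opprD.
Qed.

Lemma coboundaryMl (c : F) f : coboundary f -> coboundary (fun k => c * f k).
Proof.
move=> [f' Hf' Ef]; exists (fun k => c * f' k); first exact: laurent_fsMl.
by move=> k; rewrite Ef mulrBr.
Qed.

Lemma coboundary_shift f (e : int) : coboundary f -> coboundary (fun k => f (k - e)).
Proof.
move=> [f' Hf' Ef]; exists (fun k => f' (k - e)); first exact: laurent_fs_shift.
by move=> k; rewrite Ef; congr (_ - f' _); lia.
Qed.

Lemma coboundary_delta0_delta1 : coboundary (fun k => delta 0 k - delta 1 k).
Proof.
by exists (delta 0); [exact: laurent_fs_delta | move=> k; rewrite /delta subr_eq0].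
Qed.

Lemma delta0_not_coboundary : ~ coboundary (delta 0).
Proof.
move=> [g Hg Eg].
have jump k : k != 0 -> g k = g (k - 1).
  by move=> /negPf k0; apply/eqP; rewrite -subr_eq0 -Eg /delta k0.
have g0 : g 0 = 0.
  by apply: (laurent_fs_stable_ge_eq0 Hg (j0 := 0)) => // k ?; apply: jump; lia.
have g1 : g (-1) = 0.
  by apply: (laurent_fs_stable_le_eq0 Hg (j0 := -1)) => // k ?; apply: jump; lia.
by move: (Eg 0); rewrite /delta eqxx g0 sub0r g1 oppr0 => /eqP; rewrite oner_eq0.
Qed.

Lemma sum_coef_delta (N : nat) (c : int -> F) (j : int) :
  (forall j, N%:Z < `|j| -> c j = 0) ->
  \sum_(t < N.*2.+1) c (t%:Z - N%:Z) * delta j (t%:Z - N%:Z) = c j.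
Proof.
move=> c_supp; rewrite /delta; have [j_le|j_gt] := lerP `|j| N%:Z.
  have jt : (absz (j + N%:Z)%R < N.*2.+1)%N by lia.
  rewrite (bigD1 (Ordinal jt)) //= big1 => [|t /eqP t_ne].
    by rewrite (_ : _ - _ = j) ?eqxx ?mulr1 ?addr0 //; lia.
  case: eqP => [tj|_]; last by rewrite mulr0.
  by case: t_ne; apply: val_inj => /=; lia.
rewrite c_supp // big1 // => t _.
by case: eqP => [tj|_]; [rewrite c_supp ?mul0r //; lia | rewrite mulr0].
Qed.

End LaurentSupport.

Lemma mulz_neq_lt (b : nat) (j d : int) : 0 < d < b%:Z -> b%:Z * j != d.
Proof.
move=> Hd; apply/eqP => E.
have [H|[H|H]] : j = 0 \/ 1 <= j \/ j <= -1 by lia.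
- by rewrite H mulr0 in E; lia.
- have : b%:Z <= b%:Z * j by nia.
  lia.
- have : b%:Z * j <= 0 by nia.
  lia.
Qed.

Lemma addz_mul_inj (b d d' : nat) (q q' : int) : (d < b)%N -> (d' < b)%N ->
  d%:Z + b%:Z * q = d'%:Z + b%:Z * q' -> d = d' /\ q = q'.
Proof.
move=> hd hd' E.
have [H|[H|Eq]] : q - q' >= 1 \/ q - q' <= -1 \/ q = q' by lia.
- have : b%:Z * 1 <= b%:Z * (q - q') by rewrite ler_pM2l; lia.
  lia.
- have : b%:Z * (q - q') <= b%:Z * (- 1) by rewrite ler_pM2l; lia.
  lia.
- by rewrite -Eq in E *; case: (addIr _ E).
Qed.

Section BoundedSupport.
Variables (F : nzRingType) (n : nat).

Definition supported_in (K : nat) (v : vec F n) : Prop :=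
  forall i m, K%:Z < `|m| -> v i m = 0.

Lemma supported_in_le (K K' : nat) v :
  (K <= K')%N -> supported_in K v -> supported_in K' v.
Proof. by move=> KK' v_supp i m Hm; apply: v_supp; lia. Qed.

Lemma supported_in_sum (K s : nat) (f : 'I_s -> vec F n) :
  (forall k, supported_in K (f k)) -> supported_in K (fun i m => \sum_(k < s) f k i m).
Proof. by move=> f_supp i m Hm; apply: big1 => k _; apply: f_supp. Qed.

Lemma supported_in_twisted (K b N : nat) (c : int -> F) u :
  supported_in K u -> supported_in (K + b * N) (twisted_act b N c u).
Proof.
move=> u_supp i m Hm; apply: big1 => t _; rewrite u_supp ?mulr0 //.
have := ltn_ord t; nia.
Qed.

Lemma in_Rn_supported_in (s : nat) (u : 'I_s -> vec F n) :
  (forall k, in_Rn (u k)) -> exists K, forall k, supported_in K (u k).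
Proof.
move=> u_in.
have [K HK] := fin_all_exists (fun x : 'I_s * 'I_n => u_in x.1 x.2).
exists (\max_x K x) => k i m Hm; apply: (HK (k, i)).
by have := @leq_bigmax _ K (k, i); lia.
Qed.

Lemma twisted_actBl (b N : nat) (c1 c2 : int -> F) (u : vec F n) i m :
  twisted_act b N (fun j => c1 j - c2 j) u i m =
  twisted_act b N c1 u i m - twisted_act b N c2 u i m.
Proof. by rewrite /twisted_act -sumrB; apply: eq_bigr => t _; rewrite mulrBl. Qed.

End BoundedSupport.

Section SlotModule.
Variables (F : nzRingType) (n b r : nat).

Definition slot (i : 'I_n) (m : int) : Prop :=
  exists (k : 'I_r) (q : int), val i = (k %% n)%N /\ m = (k %/ n)%N%:Z + b%:Z * q.

Definition slot_module (v : vec F n) : Prop :=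
  [/\ in_Rn v, (forall i m, ~ slot i m -> v i m = 0) &
      forall i : 'I_n, val i = 0%N -> coboundary (fun k => v i (b%:Z * k))].

Lemma slot_module_subgroup : additive_subgroup slot_module.
Proof.
split.
- by move=> v [].
- split=> [i | // | i _]; [exact: laurent_fs0 | exact: coboundary0].
- move=> u v [Hu Su Cu] [Hv Sv Cv]; split.
  + by move=> i; apply: laurent_fsD.
  + by move=> i m Hs; rewrite Su // Sv // addr0.
  + by move=> i i0; apply: coboundaryD; [apply: Cu | apply: Cv].
- move=> u [Hu Su Cu]; split.
  + by move=> i; apply: laurent_fsN.
  + by move=> i m Hs; rewrite Su // oppr0.
  + by move=> i i0; apply: coboundaryN; apply: Cu.
Qed.

Lemma slot_moduleMl (c : F) v : slot_module v -> slot_module (fun i m => c * v i m).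
Proof.
move=> [Hv Sv Cv]; split.
- by move=> i; apply: laurent_fsMl.
- by move=> i m Hs; rewrite Sv // mulr0.
- by move=> i i0; apply: coboundaryMl; apply: Cv.
Qed.

Lemma slot_module_xpow (d : int) v :
  slot_module v -> slot_module (xpow_act (b%:Z * d) v).
Proof.
move=> [Hv Sv Cv]; split.
- by move=> i; apply: laurent_fs_shift.
- move=> i m Hs; apply: Sv => -[k [q [Ei Em]]]; apply: Hs.
  by exists k, (q + d); split => //; rewrite mulrDr addrA -Em subrK.
- move=> i i0; have := coboundary_shift d (Cv i i0).
  by congr coboundary; apply: functional_extensionality => k; rewrite /xpow_act -mulrBr.
Qed.

Lemma slot_module_sum s (f : 'I_s -> vec F n) : (forall k, slot_module (f k)) ->
  slot_module (fun i m => \sum_(k < s) f k i m).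
Proof.
have [_ U0 UD _] := slot_module_subgroup.
elim: s f => [|s IH] f Hf.
  have -> : (fun i m => \sum_(k < 0) f k i m) = (fun _ _ => 0) :> vec F n.
    by do 2 apply: functional_extensionality => ?; rewrite big_ord0.
  exact: U0.
have -> : (fun i m => \sum_(k < s.+1) f k i m) =
          (fun i m => \sum_(k < s) f (widen_ord (leqnSn s) k) i m + f ord_max i m).
  by do 2 apply: functional_extensionality => ?; rewrite big_ord_recr.
by apply: UD; [apply: IH => k | apply: Hf].
Qed.

Lemma slot_module_twisted (N : nat) (c : int -> F) u :
  slot_module u -> slot_module (twisted_act b N c u).
Proof.
move=> Hu; apply: slot_module_sum => t.
exact/slot_moduleMl/slot_module_xpow.
Qed.

Lemma slot_module_xpow_stable : xpow_stable b%:Z slot_module.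
Proof.
split=> [v Hv | v Hv].
  by have := slot_module_xpow 1 Hv; rewrite mulr1.
exists (xpow_act (b%:Z * -1) v); split; first exact: slot_module_xpow.
by do 2 apply: functional_extensionality => ?; rewrite /xpow_act; congr (v _ _); lia.
Qed.

Hypotheses (n_gt0 : (0 < n)%N) (b_gt0 : (0 < b)%N) (r_le_nb : (r <= n * b)%N).

Lemma slot_div_lt (k : 'I_r) : (k %/ n < b)%N.
Proof. by rewrite ltn_divLR // mulnC; apply: leq_trans r_le_nb. Qed.

Lemma slot_residue (i : 'I_n) (d : nat) (q : int) :
  (d < b)%N -> slot i (d%:Z + b%:Z * q) -> (i + n * d < r)%N.
Proof.
move=> hd [k [q' [Ei Em]]].
have [-> _] := addz_mul_inj hd (slot_div_lt k) Em.
by rewrite Ei mulnC addnC -divn_eq.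
Qed.

Definition single (i0 : nat) (f : int -> F) : vec F n :=
  fun i m => if val i == i0 then f m else 0.

Lemma slot_module_single (i0 : nat) (f : int -> F) : laurent_fs f ->
  (forall (i : 'I_n) m, val i = i0 -> f m != 0 -> slot i m) ->
  (i0 = 0%N -> coboundary (fun k => f (b%:Z * k))) ->
  slot_module (single i0 f).
Proof.
move=> Hf Sf Cf; split.
- by move=> i; rewrite /single; case: eqP => _; [exact: Hf | exact: laurent_fs0].
- move=> i m Hs; rewrite /single; case: eqP => // Ei.
  by apply/eqP; apply: contra_notT Hs; exact: Sf.
- move=> i i_0; rewrite /single i_0.
  by case: eqP => [E|_]; [exact: Cf | exact: coboundary0].
Qed.

Definition slot_gen (k : 'I_r) : vec F n :=
  single (k %% n) (if val k == 0%N then (fun m => delta F 0 m - delta F b m)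
                   else delta F (k %/ n)%N).

Lemma slot_gen_in (k : 'I_r) : slot_module (slot_gen k).
Proof.
have kb := slot_div_lt k.
apply: slot_module_single.
- by case: ifP => _; [apply: laurent_fsD; [|apply: laurent_fsN] |]; exact: laurent_fs_delta.
- move=> i m Ei; have kq (q : int) : m = (k %/ n)%N%:Z + b%:Z * q -> slot i m.
    by move=> ->; exists k, q.
  have kd0 : val k = 0%N -> (k %/ n = 0)%N by move=> ->; rewrite div0n.
  rewrite /delta; case: (eqVneq (val k) 0%N) => [k0|k0] /=.
    case: (eqVneq m 0) => [m0 _|m0]; first by apply: (kq 0); rewrite (kd0 k0) m0 mulr0.
    case: (eqVneq m b%:Z) => [mb _|mb]; first by apply: (kq 1); rewrite (kd0 k0) mb mulr1.
    by rewrite subrr eqxx.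
  case: (eqVneq m (k %/ n)%N%:Z) => [mk _|]; last by rewrite eqxx.
  by apply: (kq 0); rewrite mk mulr0 addr0.
- move=> kn0; case: (eqVneq (val k) 0%N) => [k0|k0].
    have bz : b%:Z != 0 by rewrite eqz_nat -lt0n.
    have := coboundary_delta0_delta1 F; congr coboundary.
    apply: functional_extensionality => j.
    have E0 : (b%:Z * j == 0) = (j == 0) by rewrite mulf_eq0 (negPf bz).
    have E1 : (b%:Z * j == b%:Z) = (j == 1) by rewrite -{2}(mulr1 b%:Z) (inj_eq (mulfI bz)).
    by rewrite /delta E0 E1.
  have kpos : (0 < k %/ n)%N.
    by rewrite lt0n; apply: contra k0 => /eqP kd; rewrite /= (divn_eq k n) kd kn0.
  have := coboundary0 F; congr coboundary; apply: functional_extensionality => j.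
  by rewrite /delta (negPf (mulz_neq_lt _ _)) //; lia.
Qed.

Lemma twisted_act_single (N : nat) (c : int -> F) (i0 : nat) (f : int -> F) i m :
  twisted_act b N c (single i0 f) i m =
  if val i == i0 then \sum_(t < N.*2.+1) c (t%:Z - N%:Z) * f (m - b%:Z * (t%:Z - N%:Z))
  else 0.
Proof.
by rewrite /twisted_act /single; case: eqP => // _; apply: big1 => t _; rewrite mulr0.
Qed.

Lemma twisted_delta (N : nat) (c : int -> F) (d d' : nat) (q j : int) :
  (d < b)%N -> (d' < b)%N -> (forall j, N%:Z < `|j| -> c j = 0) ->
  \sum_(t < N.*2.+1) c (t%:Z - N%:Z) *
     delta F (d%:Z + b%:Z * q) (d'%:Z + b%:Z * j - b%:Z * (t%:Z - N%:Z)) =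
  if d == d' then c (j - q) else 0.
Proof.
move=> d_lt d'_lt c_supp.
have split_eq (s : int) : (d'%:Z + b%:Z * j - b%:Z * s == d%:Z + b%:Z * q) =
                          (d == d') && (s == j - q).
  apply/eqP/andP => [E|[/eqP <- /eqP ->]]; last by rewrite mulrBr; lia.
  have E' : d%:Z + b%:Z * q = d'%:Z + b%:Z * (j - s) by rewrite -E mulrBr addrA.
  by have [-> ->] := addz_mul_inj d_lt d'_lt E'; rewrite eqxx opprB addrC subrK.
rewrite /delta; under eq_bigr do rewrite split_eq.
case: eqP => _; last by apply: big1 => t _; rewrite mulr0.
exact: sum_coef_delta.
Qed.

Lemma slot_gen_twisted (N : nat) (c : int -> F) (k k' : 'I_r) (i : 'I_n) (j : int) :
  (forall j, N%:Z < `|j| -> c j = 0) -> val i = (k' %% n)%N ->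
  twisted_act b N c (slot_gen k) i ((k' %/ n)%N%:Z + b%:Z * j) =
  if k == k' then c j - (val k == 0%N)%:R * c (j - 1) else 0.
Proof.
move=> c_supp Ei; rewrite twisted_act_single Ei.
have [kn|kn] := eqVneq (k' %% n)%N (k %% n)%N; last first.
  by case: eqP => // kk'; rewrite kk' eqxx in kn.
have kk' : (k == k') = (k %/ n == k' %/ n)%N.
  apply/eqP/eqP => [-> // | kd]; apply: val_inj.
  by rewrite /= (divn_eq k n) (divn_eq k' n) kd kn.
have kb := slot_div_lt k; have k'b := slot_div_lt k'.
case: (eqVneq (val k) 0%N) => [k0|k0] /=; last first.
  rewrite (_ : delta F _ = delta F ((k %/ n)%N%:Z + b%:Z * 0)); last by rewrite mulr0 addr0.
  rewrite twisted_delta // kk'.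
  by rewrite mul0r !subr0.
have kd0 : (k %/ n = 0)%N by rewrite k0 div0n.
rewrite (_ : delta F b%:Z = delta F (0%N%:Z + b%:Z * 1)); last by rewrite add0r mulr1.
rewrite (_ : delta F 0 = delta F (0%N%:Z + b%:Z * 0)); last by rewrite add0r mulr0.
under eq_bigr do rewrite mulrBr.
rewrite sumrB !twisted_delta // kk' kd0 mul1r subr0.
by case: ifP => //; rewrite subrr.
Qed.

Lemma slot_gen_free : free_family_b b slot_gen.
Proof.
move=> N c c_supp sum0 k j.
pose ik : 'I_n := Ordinal (ltn_pmod k n_gt0).
have step j' : c k j' - (val k == 0%N)%:R * c k (j' - 1) = 0.
  have := sum0 ik ((k %/ n)%N%:Z + b%:Z * j').
  rewrite (bigD1 k) //= (slot_gen_twisted k j' (c_supp k)) // eqxx big1 ?addr0 //.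
  by move=> k' /negPf k'k; rewrite (slot_gen_twisted k' j' (c_supp k')) // k'k.
have [k0|k0] := eqVneq (val k) 0%N; last by have := step j; rewrite (negPf k0) mul0r subr0.
apply: (laurent_fs_stable_ge_eq0 (j0 := j)) => [|j' _|//]; first by exists N; apply: c_supp.
by have /eqP := step j'; rewrite k0 eqxx mul1r subr_eq0 => /eqP.
Qed.

Definition window (Q : nat) (v : vec F n) : {ffun 'I_r * 'I_Q.*2.+1 -> F} :=
  [ffun x : 'I_r * 'I_Q.*2.+1 =>
     v (Ordinal (ltn_pmod x.1 n_gt0)) ((x.1 %/ n)%N%:Z + b%:Z * (x.2%:Z - Q%:Z))].

Lemma slot_in_window (Q : nat) i m : slot i m -> `|m| <= (b * Q)%N%:Z ->
  exists x : 'I_r * 'I_Q.*2.+1,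
    i = Ordinal (ltn_pmod x.1 n_gt0) /\ m = (x.1 %/ n)%N%:Z + b%:Z * (x.2%:Z - Q%:Z).
Proof.
move=> [k [q [Ei ->]]] m_le.
have q_bounds : - Q%:Z <= q <= Q%:Z.
  move: m_le (slot_div_lt k); move: (k %/ n)%N => d /ler_normlP[m_ge m_le] d_lt.
  have b_pos : 0 < b%:Z by rewrite ltz_nat.
  rewrite PoszM in m_ge m_le; apply/andP; split; rewrite leNgt; apply/negP => q_out.
    have : b%:Z * q <= b%:Z * (- Q%:Z - 1) by rewrite ler_pM2l //; lia.
    lia.
  have : b%:Z * (Q%:Z + 1) <= b%:Z * q by rewrite ler_pM2l //; lia.
  lia.
have qt : (absz (q + Q%:Z)%R < Q.*2.+1)%N by lia.
exists (k, Ordinal qt); split; first exact: val_inj.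
by congr (_ + _ * _); rewrite /=; lia.
Qed.

Lemma window_inj (Q : nat) v w : slot_module v -> slot_module w ->
  supported_in (b * Q) v -> supported_in (b * Q) w ->
  window Q v = window Q w -> forall i m, v i m = w i m.
Proof.
move=> v_in w_in v_supp w_supp /ffunP vw i m.
have [[x [-> ->]]|no_x] := classic (exists x : 'I_r * 'I_Q.*2.+1,
    i = Ordinal (ltn_pmod x.1 n_gt0) /\ m = (x.1 %/ n)%N%:Z + b%:Z * (x.2%:Z - Q%:Z)).
  by have := vw x; rewrite !ffunE.
have vanish u : slot_module u -> supported_in (b * Q) u -> u i m = 0.
  move=> [_ u_slot _] u_supp; apply: NNPP => u_nz.
  have sl : slot i m by apply: NNPP => /u_slot.
  have m_le : `|m| <= (b * Q)%N%:Z by rewrite leNgt; apply/negP => /u_supp.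
  exact: no_x (slot_in_window sl m_le).
by rewrite !vanish.
Qed.

Lemma slot_module_not_xpow_stable (e : nat) : (0 < e < b)%N -> (0 < r)%N ->
  ~ xpow_stable e%:Z slot_module.
Proof.
move=> /andP[e_gt0 e_lt_b] r_gt0 [xpow_in xpow_out].
pose i0 : 'I_n := Ordinal n_gt0.
have [Ha|Ha] := ltnP (n * (b - e)) r.
- have v_in : slot_module (single 0 (delta F (- e%:Z))).
    apply: slot_module_single; first exact: laurent_fs_delta.
      move=> i m i_0; rewrite /delta.
      case: (eqVneq m (- e%:Z)) => [-> _|]; last by rewrite eqxx.
      exists (Ordinal Ha), (-1); rewrite /= modnMr mulKn //; split => //; lia.
    move=> _; have := coboundary0 F; congr coboundary.
    apply: functional_extensionality => k; rewrite /delta.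
    by rewrite -eqr_oppLR -mulrN (negPf (mulz_neq_lt _ _)) //; lia.
  have [_ _ /(_ i0 erefl)] := xpow_in _ v_in.
  have -> : (fun k => xpow_act e%:Z (single 0 (delta F (- e%:Z))) i0 (b%:Z * k)) =
            delta F 0.
    apply: functional_extensionality => k; rewrite /xpow_act /single /delta /=.
    by rewrite subr_eq addNr mulf_eq0 eqz_nat (gtn_eqF b_gt0).
  exact: delta0_not_coboundary.
- have [w [[_ w_slot _] Ew]] := xpow_out _ (slot_gen_in (Ordinal r_gt0)).
  have w_nz : w i0 (b%:Z - e%:Z) != 0.
    have := congr1 (fun v => v i0 b%:Z) Ew.
    rewrite /xpow_act /slot_gen /single /delta /= mod0n eqxx /= => <-.
    have b_pos : 0 < b%:Z by rewrite ltz_nat.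
    by rewrite (gt_eqF b_pos) eqxx sub0r oppr_eq0 oner_eq0.
  have : slot i0 ((b - e)%N%:Z + b%:Z * 0).
    apply: NNPP => /w_slot; rewrite mulr0 addr0 -subzn; last exact: ltnW.
    by move=> w0; move: w_nz; rewrite w0 eqxx.
  have be_lt_b : (b - e < b)%N by lia.
  by move=> /(slot_residue be_lt_b); rewrite /= add0n ltnNge Ha.
Qed.

Lemma slot_module_e (r_gt0 : (0 < r)%N) : e_equals slot_module b.
Proof.
split => // [|e e_gt0 e_lt_b]; first exact: slot_module_xpow_stable.
by apply: slot_module_not_xpow_stable; rewrite ?e_gt0.
Qed.

End SlotModule.

Section Counting.
Variables (F : finNzRingType) (n b r : nat).
Hypotheses (n_gt0 : (0 < n)%N) (b_gt0 : (0 < b)%N) (r_le_nb : (r <= n * b)%N).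

(* The table entry [(k, t)] is the coefficient of [x^(t - N)]. *)
Definition table_coef (s N : nat) (h : {ffun 'I_s * 'I_N.*2.+1 -> F}) (k : 'I_s)
    (j : int) : F :=
  if `|j| <= N%:Z then h (k, inord (absz (j + N%:Z))) else 0.

Lemma table_coef_supp s N h k j : N%:Z < `|j| -> @table_coef s N h k j = 0.
Proof. by rewrite /table_coef ltNge => /negPf ->. Qed.

Lemma table_coefE s N h k (t : 'I_N.*2.+1) : @table_coef s N h k (t%:Z - N%:Z) = h (k, t).
Proof.
have t_lt : (t <= N + N)%N by rewrite addnn -ltnS.
rewrite /table_coef ifT; last by lia.
by congr (h (k, _)); apply: val_inj; rewrite /= inordK; lia.
Qed.

(* Counting argument: for large [N], the coefficient tables of size [s (2N+1)]
   inject into the windows of size [r (2(M + N) + 1)], so [s <= r]. *)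
Lemma slot_module_free_le (s : nat) (u : 'I_s -> vec F n) :
  (forall k, slot_module b r (u k)) -> free_family_b b u -> (s <= r)%N.
Proof.
move=> u_in u_free.
have [M u_supp] : exists M, forall k, supported_in M (u k).
  by apply: in_Rn_supported_in => k; case: (u_in k).
pose N := (r * M)%N; pose Q := (M + N)%N.
pose Phi h i m := \sum_(k < s) twisted_act b N (@table_coef s N h k) (u k) i m.
have Phi_in h : slot_module b r (Phi h).
  by apply: slot_module_sum => k; apply: slot_module_twisted.
have Phi_supp h : supported_in (b * Q) (Phi h).
  apply: supported_in_sum => k; rewrite mulnDr.
  by apply: supported_in_twisted; apply: supported_in_le (u_supp k); rewrite leq_pmull.
have Phi_inj : injective (fun h => window b r n_gt0 Q (Phi h)).
  move=> h1 h2.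
  move=> /(window_inj b_gt0 r_le_nb (Phi_in h1) (Phi_in h2) (Phi_supp h1) (Phi_supp h2)) E.
  apply/ffunP => -[k t]; apply/eqP; rewrite -subr_eq0 -!table_coefE; apply/eqP.
  apply: (u_free N (fun k j => table_coef h1 k j - table_coef h2 k j)).
    by move=> k' j' j'_gt; rewrite !table_coef_supp ?subrr.
  move=> i m; under eq_bigr do rewrite twisted_actBl.
  by rewrite sumrB; apply/eqP; rewrite subr_eq0; apply/eqP; exact: E.
have := leq_card _ Phi_inj; rewrite !card_ffun !card_prod !card_ord.
rewrite leq_exp2l ?card_finNzRing_gt1 // -!addnn /Q /N; nia.
Qed.

End Counting.

Theorem lemma6p19 (p : nat) (hp : prime p) (n b r : nat) :
  (0 < n)%N -> (0 < b)%N -> (0 < r)%N -> (r <= n * b)%N ->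
  exists U : vec 'F_p n -> Prop,
    [/\ additive_subgroup U, e_equals U b & rank_b U b r].
Proof.
move=> n_gt0 b_gt0 r_gt0 r_le_nb; exists (slot_module b r); split.
- exact: slot_module_subgroup.
- exact: slot_module_e.
- split; last by move=> s u; apply: slot_module_free_le.
  exists (@slot_gen _ n b r); split; first by move=> k; apply: slot_gen_in.
  exact: slot_gen_free.
Qed.
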